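(* Let $c\geq 1$ be an integer. For every integer $n\geq 1$, $$ \bar a_c(n) \equiv \begin{cases} 2 \pmod{4} & \text{if } n = k^2 \text{ for some integer } k, \\ 2(c+1) \pmod{4} & \text{if } n = 2k^2 \text{ for some integer } k, \\ 0 \pmod 4 & \text{otherwise}. \end{cases} $$
   Context: For $|q|<1$ and integers $m\geq 1$, write $f_m:=\prod_{j\geq 1}(1-q^{jm})$. For an integer $c\geq 1$, the generalized overcubic partition function $\bar a_c(n)$ is defined by $$\sum_{n\geq 0}\bar a_c(n)q^n=\frac{f_4^{c-1}}{f_1^2f_2^{2c-3}}.$$ Combinatorially, $\bar a_c(n)$ counts overpartitions of $n$ (partitions in which the first occurrence of each part size may be overlined) in which each even part may appear in $c$ different colors (the overlining rule being applied to each colored part size separately), while odd parts have only one color. *)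

From mathcomp Require Import all_boot all_order all_algebra.
Set Implicit Arguments. Unset Strict Implicit. Unset Printing Implicit Defensive.
Import Order.TTheory GRing.Theory Num.Theory.
Local Open Scope ring_scope.

(* Truncated q-series factor (1 - q^m)^e for an integer exponent e, as a
   polynomial over int that agrees with the true power series modulo
   q^(N+1) whenever m >= 1.  For e < 0 the factor 1/(1-q^m) is replaced by
   the truncated geometric series sum_{t <= N} q^(m t). *)
Definition eta_factor (N m : nat) (e : int) : {poly int} :=
  match e with
  | Posz k => (1 - 'X^m) ^+ k
  | Negz k => (\sum_(t < N.+1) 'X^(m * t)) ^+ k.+1
  end.

(* Truncation (mod q^(N+1)) of  f_4^(c-1) / (f_1^2 f_2^(2c-3))
   = prod_{j>=1} (1-q^{4j})^(c-1) (1-q^j)^(-2) (1-q^{2j})^(-(2c-3));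
   factors with j > N are congruent to 1 mod q^(N+1). *)
Definition overcubic_gen (c N : nat) : {poly int} :=
  \prod_(1 <= j < N.+1)
     (eta_factor N (4 * j) (c%:Z - 1)
      * eta_factor N j (-2)
      * eta_factor N (2 * j) (- (2 * c%:Z - 3))).

Definition abar (c n : nat) : int := (overcubic_gen c n)`_n.

From mathcomp Require Import all_boot all_order all_algebra.
From mathcomp Require Import ring zify.
Set Implicit Arguments. Unset Strict Implicit. Unset Printing Implicit Defensive.
Import GRing.Theory.
Local Open Scope ring_scope.

(* Work modulo 4 and modulo q^(N+1). With x = q^j, G = 1/(1-x) and
   G2 = 1/(1-x^2), the j-th factor of the product is
   [(1-x)G] [(1+x)G] [(1+x^2)G2]^(c-1) [(1-x^2)G2]^(c-2).
   Since 1+y = 1-y mod 2, (1+y)/(1-y) = 1 + 2(1/(1-y) - 1) mod 4, and a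
   product of terms 1 + 2u_i is 1 + 2 sum u_i mod 4. Hence
   abar_c(n) = 2 (d(n) + (c-1) d(n/2)) mod 4, where d counts divisors, and
   d(n) is odd exactly when n is a square. *)

Section CongruenceModulo4.
Variables (R : comPzRingType) (a : R).

Definition congm (p q : R) := exists r s : R, p - q = a * r + s *+ 4.

Lemma congm_eq p q : p = q -> congm p q.
Proof. by move=> ->; exists 0, 0; ring. Qed.

Lemma congm_trans p q u : congm p q -> congm q u -> congm p u.
Proof.
move=> [r [s e]] [r' [s' e']]; exists (r + r'), (s + s').
by rewrite -[p](subrK q) -addrA e e'; ring.
Qed.

Lemma congmM p q p' q' : congm p q -> congm p' q' -> congm (p * p') (q * q').
Proof.
move=> [r [s e]] [r' [s' e']]; exists (r * p' + q * r'), (s * p' + q * s').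
have -> : p * p' - q * q' = (p - q) * p' + q * (p' - q') by ring.
by rewrite e e'; ring.
Qed.

Lemma congmX p q k : congm p q -> congm (p ^+ k) (q ^+ k).
Proof.
move=> h; elim: k => [|k IH]; first exact: congm_eq.
by rewrite !exprS; apply: congmM.
Qed.

Lemma congm_odd_mul u v :
  congm ((1 + u *+ 2) * (1 + v *+ 2)) (1 + (u + v) *+ 2).
Proof. by exists 0, (u * v); ring. Qed.

Lemma congm_odd_exp u k : congm ((1 + u *+ 2) ^+ k) (1 + (u *+ k) *+ 2).
Proof.
elim: k => [|k IH]; first by apply: congm_eq; ring.
rewrite exprSr [u *+ k.+1]mulrSr.
exact: congm_trans (congmM IH (congm_eq (erefl _))) (congm_odd_mul _ _).
Qed.

Lemma congm_odd_prod (I : Type) (r : seq I) (P : pred I) (F u : I -> R) :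
  (forall i, P i -> congm (F i) (1 + u i *+ 2)) ->
  congm (\prod_(i <- r | P i) F i) (1 + (\sum_(i <- r | P i) u i) *+ 2).
Proof.
apply: (big_ind2 (fun x y => congm x (1 + y *+ 2))).
  by apply: congm_eq; ring.
move=> x1 x2 y1 y2 hx hy /=.
exact: congm_trans (congmM hx hy) (congm_odd_mul _ _).
Qed.

Lemma congm_inv_conj y g :
  congm ((1 - y) * g) 1 -> congm ((1 + y) * g) (1 + (g - 1) *+ 2).
Proof.
move=> [r [s e]]; exists (- r), (- s).
have -> : (1 + y) * g - (1 + (g - 1) *+ 2) = - ((1 - y) * g - 1) by ring.
by rewrite e; ring.
Qed.

End CongruenceModulo4.

Lemma congm_coef N (p q : {poly int}) :
  congm 'X^(N.+1) p q -> (p`_N = q`_N %[mod 4])%Z.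
Proof.
move=> [r [s e]].
have -> : p = q + ('X^(N.+1) * r + s *+ 4) by rewrite -e; ring.
by rewrite coefD coefD coefXnM ltnSn add0r coefMn -[_ *+ 4]mulr_natr addrC modzMDl.
Qed.

Definition geom (N m : nat) : {poly int} := \sum_(t < N.+1) 'X^(m * t).

Lemma geom_mul_inv N m : (0 < m)%N -> congm 'X^(N.+1) ((1 - 'X^m) * geom N m) 1.
Proof.
move=> m_gt0; exists (- 'X^(m * N.+1 - N.+1)), 0.
have geomE : geom N m = \sum_(t < N.+1) 'X^m ^+ t.
  by apply: eq_bigr => t _; rewrite exprM.
have XmNE : 'X^(m * N.+1) = 'X^(N.+1) * 'X^(m * N.+1 - N.+1) :> {poly int}.
  by rewrite -exprD subnKC // leq_pmull.
have -> : (1 - 'X^m) * geom N m = - (('X^m - 1) * \sum_(t < N.+1) 'X^m ^+ t).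
  by rewrite geomE; ring.
by rewrite -subrX1 -exprM XmNE; ring.
Qed.

Lemma eta_factorE N c j : (0 < c)%N ->
  eta_factor N (4 * j) (c%:Z - 1) * eta_factor N j (-2)
    * eta_factor N (2 * j) (- (2 * c%:Z - 3))
  = (1 - 'X^j) * geom N j * ((1 + 'X^j) * geom N j)
    * ((1 + 'X^j ^+ 2) * geom N (2 * j)) ^+ c.-1
    * ((1 - 'X^j ^+ 2) * geom N (2 * j)) ^+ c.-2.
Proof.
have X2E : 'X^(2 * j) = 'X^j ^+ 2 :> {poly int} by rewrite mulnC exprM.
have X4E : 'X^(4 * j) = 'X^j ^+ 4 :> {poly int} by rewrite mulnC exprM.
have -> : -2 = Negz 1 by [].
case: c => [//|[|c]] _.
- have -> : 1%:Z - 1 = Posz 0 by [].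
  have -> : - (2 * 1%:Z - 3) = Posz 1 by [].
  by rewrite /eta_factor /= X2E -/(geom N j); ring.
- have -> : c.+2%:Z - 1 = Posz c.+1 by lia.
  have -> : - (2 * c.+2%:Z - 3) = Negz (c + c).
    by rewrite NegzE; lia.
  rewrite /eta_factor -/(geom N j) -/(geom N (2 * j)) X4E /= -addSn exprD.
  have -> : 1 - 'X^j ^+ 4 = (1 + 'X^j ^+ 2) * (1 - 'X^j ^+ 2) :> {poly int} by ring.
  by rewrite !exprMn !exprS; ring.
Qed.

Lemma eta_factor_congm N c j : (0 < c)%N -> (0 < j)%N ->
  congm 'X^(N.+1)
    (eta_factor N (4 * j) (c%:Z - 1) * eta_factor N j (-2)
       * eta_factor N (2 * j) (- (2 * c%:Z - 3)))
    (1 + ((geom N j - 1) + (geom N (2 * j) - 1) *+ c.-1) *+ 2).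
Proof.
move=> c_gt0 j_gt0; rewrite eta_factorE //.
have inv1 := geom_mul_inv N j_gt0.
have inv2 : congm 'X^(N.+1) ((1 - 'X^j ^+ 2) * geom N (2 * j)) 1.
  by rewrite -exprM mulnC; apply: geom_mul_inv; rewrite muln_gt0 j_gt0.
apply: (congm_trans (q := 1 * (1 + (geom N j - 1) *+ 2)
   * (1 + (geom N (2 * j) - 1) *+ 2) ^+ c.-1 * 1 ^+ c.-2)).
  apply: congmM; last exact: congmX.
  apply: congmM; last exact/congmX/congm_inv_conj.
  by apply: congmM; last exact: congm_inv_conj.
rewrite mul1r expr1n mulr1.
exact: congm_trans (congmM (congm_eq _ (erefl _)) (congm_odd_exp _ _ _))
                   (congm_odd_mul _ _ _).
Qed.

Lemma sum_sym_diag (V : nmodType) (f : nat -> nat -> V) n :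
  (forall i k, f i k = f k i) ->
  \sum_(0 <= i < n) \sum_(0 <= k < n) f i k
  = \sum_(0 <= i < n) f i i + (\sum_(0 <= i < n) \sum_(0 <= k < i) f i k) *+ 2.
Proof.
move=> f_sym; elim: n => [|n IH]; first by rewrite !big_geq // mul0rn addr0.
have rowE : \sum_(0 <= i < n) \sum_(0 <= k < n.+1) f i k
    = \sum_(0 <= i < n) \sum_(0 <= k < n) f i k + \sum_(0 <= k < n) f n k.
  rewrite -big_split /=; apply: eq_bigr => i _.
  by rewrite big_nat_recr //= f_sym.
rewrite !big_nat_recr //= rowE IH mulrnDl !mulr2n.
by rewrite -!addrA [f n n + _]addrC -!addrA.
Qed.

Lemma geom_sub1 N m : geom N m - 1 = \sum_(0 <= t < N) 'X^(m * t.+1).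
Proof.
rewrite /geom big_ord_recl /= muln0 expr0 addrC addKr big_mkord.
by apply: eq_bigr => t _; rewrite /bump.
Qed.

Definition sq_series (N m : nat) : {poly int} := \sum_(0 <= i < N) 'X^(m * i.+1 ^ 2).

(* The double sum over [j, t] is symmetric, so off the diagonal [j = t] its
   terms come in pairs. *)
Lemma sum_geom_sub1 N m :
  exists D, \sum_(1 <= j < N.+1) (geom N (m * j) - 1) = sq_series N m + D *+ 2.
Proof.
rewrite big_add1 /=.
under eq_bigr => j _ do rewrite geom_sub1.
rewrite (@sum_sym_diag _ (fun j t => 'X^(m * j.+1 * t.+1))); last first.
  by move=> j t; rewrite mulnAC.
eexists; congr (_ + _); apply: eq_bigr => i _.
by rewrite -mulnA mulnn.
Qed.

Lemma overcubic_gen_congm c N : (0 < c)%N ->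
  congm 'X^(N.+1) (overcubic_gen c N)
    (1 + (sq_series N 1 + sq_series N 2 *+ c.-1) *+ 2).
Proof.
move=> c_gt0.
have oddE : congm 'X^(N.+1) (overcubic_gen c N)
    (1 + (\sum_(1 <= j < N.+1) (geom N (1 * j) - 1)
          + (\sum_(1 <= j < N.+1) (geom N (2 * j) - 1)) *+ c.-1) *+ 2).
  rewrite /overcubic_gen big_seq -sumrMnl -big_split big_seq /=.
  apply: congm_odd_prod => j; rewrite mem_index_iota mul1n => /andP [j_gt0 _].
  exact: eta_factor_congm.
have [D1 sum1E] := sum_geom_sub1 N 1; have [D2 sum2E] := sum_geom_sub1 N 2.
rewrite sum1E sum2E in oddE.
apply: congm_trans oddE _; exists 0, (D1 + D2 *+ c.-1).
by rewrite mulrnDl -!mulrnA; ring.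
Qed.

Lemma coef_sq_series N m n :
  (sq_series N m)`_n = \sum_(i < N) ((n == m * i.+1 ^ 2)%N%:R : int).
Proof.
by rewrite /sq_series coef_sum big_mkord; apply: eq_bigr => i _; rewrite coefXn.
Qed.

Lemma coef_sq_series_eq1 m n k : (0 < m)%N -> (0 < n)%N -> n = (m * k ^ 2)%N ->
  (sq_series n m)`_n = 1.
Proof.
move=> m_gt0 n_gt0 nE; rewrite coef_sq_series.
have k_gt0 : (0 < k)%N by move: n_gt0; rewrite nE muln_gt0 sqrn_gt0 => /andP [].
have k_lt : (k.-1 < n)%N by rewrite nE; nia.
rewrite (bigD1 (Ordinal k_lt)) //= prednK // -nE eqxx big1 ?addr0 // => i ne.
case: eqP => // iE; case/eqP: ne; apply: val_inj => /=.
apply: succn_inj; rewrite prednK //; apply/sqrn_inj/eqP.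
by rewrite -(eqn_pmul2l m_gt0) -iE nE.
Qed.

Lemma coef_sq_series_eq0 m n : ~ (exists k, n = (m * k ^ 2)%N) ->
  (sq_series n m)`_n = 0.
Proof.
move=> nsq; rewrite coef_sq_series big1 // => i _.
by case: eqP => // iE; case: nsq; exists i.+1.
Qed.

Lemma abar_mod4 c n : (0 < c)%N -> (0 < n)%N ->
  (abar c n = ((sq_series n 1)`_n + (sq_series n 2)`_n *+ c.-1) *+ 2 %[mod 4])%Z.
Proof.
move=> c_gt0 n_gt0; rewrite /abar (congm_coef (overcubic_gen_congm n c_gt0)).
by rewrite coefD coef1 gtn_eqF // add0r coefMn coefD coefMn.
Qed.

Lemma sqrn_neq_double_sqrn k m : (0 < k)%N -> (k ^ 2 != 2 * m ^ 2)%N.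
Proof.
move=> k_gt0; apply/eqP => kmE.
have m_gt0 : (0 < m)%N by move: k_gt0; rewrite -sqrn_gt0 kmE muln_gt0 sqrn_gt0.
have := congr1 (logn 2) kmE.
by rewrite lognM ?sqrn_gt0 // !lognX (_ : logn 2 2 = 1) //; lia.
Qed.

Theorem theorem1p1 (c n : nat) (hc : (1 <= c)%N) (hn : (1 <= n)%N) :
  ((exists k : nat, n = (k ^ 2)%N) -> (abar c n = 2 %[mod 4])%Z) /\
  ((exists k : nat, n = (2 * k ^ 2)%N) ->
      (abar c n = 2 * (c%:Z + 1) %[mod 4])%Z) /\
  (~ (exists k : nat, n = (k ^ 2)%N) -> ~ (exists k : nat, n = (2 * k ^ 2)%N) ->
      (abar c n = 0 %[mod 4])%Z).
Proof.
have sq_not_double_sq k : n = (k ^ 2)%N -> ~ exists m, n = (2 * m ^ 2)%N.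
  move=> nE [m nmE]; have k_gt0 : (0 < k)%N by rewrite -sqrn_gt0 -nE.
  by move/eqP: (sqrn_neq_double_sqrn m k_gt0); rewrite -nE.
rewrite abar_mod4 //; split; [|split].
- move=> [k nE].
  rewrite (coef_sq_series_eq1 (k := k)) ?mul1n //.
  by rewrite (coef_sq_series_eq0 (sq_not_double_sq k nE)) mul0rn addr0.
- move=> [k nE].
  rewrite (coef_sq_series_eq1 (m := 2) (k := k)) // coef_sq_series_eq0 ?add0r; last first.
    by move=> [m]; rewrite mul1n => /sq_not_double_sq; apply; exists k.
  case: c hc => // c _ /=.
  have -> : 2 * (c.+1%:Z + 1) = 1 * 4 + 1 *+ c *+ 2 by rewrite intS -natz; ring.
  by rewrite modzMDl.
- move=> nsq ndsq.
  rewrite !coef_sq_series_eq0 ?mul0rn ?addr0 //.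
  by move=> [k]; rewrite mul1n => nE; apply: nsq; exists k.
Qed.
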